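(* Let $G=(V,E)$ be a finite simple connected graph with $n\ge2$ nodes and $0\le t<\kappa(G)$. For every node $v\in V$ there exists a failure pattern $\varphi\in\Phi^\star_v$ such that no node $u\neq v$ crashes at round $1$ in $\varphi$ and $\mathrm{ecc}(v,\varphi)\ge\mathrm{radius}(G,t)$.
   Context: $\kappa(G)$ is the vertex connectivity of $G$; $N(v)$ is the neighbourhood of $v$. Synchronous rounds; in each round every node sends a message to every neighbour. Failure patterns. A failure pattern is a set $\varphi=\{(v,F_v,f_v): v\in F\}$ with $F\subseteq V$, $|F|\le t$, integers $f_v\ge1$ and nonempty $F_v\subseteq N(v)$: $v$ acts normally in rounds $<f_v$, in round $f_v$ (the round at which $v$ crashes) its messages reach exactly $N(v)\setminus F_v$, and afterwards it sends nothing. Nodes in $F$ are faulty, the others correct. $\Phi^{(t)}_{\mathrm{all}}$ is the set of all failure patterns with at most $t$ faulty nodes. Causal paths, eccentricity, radius. A causal path w.r.t. $\varphi$ from $v$ to $v'$ is $u_1=v,\dots,u_q=v'$ with $u_{i+1}\in N(u_i)$, $u_i$ not crashed during rounds $1,\dots,i-1$, and $u_{i+1}\notin F_{u_i}$ if $u_i$ crashes at round $i$; its length is $q-1$. $\mathrm{ecc}(v,\varphi)$ is the maximum over correct nodes $v'$ of the minimum length of a causal path w.r.t. $\varphi$ from $v$ to $v'$ ($\infty$ if some correct node has none). $\Phi^\star_v=\{\varphi\in\Phi^{(t)}_{\mathrm{all}}:\mathrm{ecc}(v,\varphi)<\infty\}$ and $\mathrm{radius}(G,t)=\min_{v\in V}\max_{\varphi\in\Phi^\star_v}\mathrm{ecc}(v,\varphi)$.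 *)

From mathcomp Require Import all_boot.
From Stdlib Require Import ClassicalEpsilon.

Set Implicit Arguments.
Unset Strict Implicit.
Unset Printing Implicit Defensive.

Definition is_max_nat (P : nat -> Prop) (m : nat) := P m /\ forall k, P k -> k <= m.
Definition is_min_nat (P : nat -> Prop) (m : nat) := P m /\ forall k, P k -> m <= k.

(* the maximum of P when it exists (0 otherwise, never used) *)
Definition natmax (P : nat -> Prop) : nat :=
  match excluded_middle_informative (exists m, is_max_nat P m) with
  | left H => proj1_sig (constructive_indefinite_description _ H)
  | right _ => 0
  end.

(* the minimum of P when it exists (0 otherwise, never used) *)
Definition natmin (P : nat -> Prop) : nat :=
  match excluded_middle_informative (exists m, is_min_nat P m) with
  | left H => proj1_sig (constructive_indefinite_description _ H)
  | right _ => 0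
  end.

Section Graph.
Variable T : finType.
Variable e : rel T.

Definition nbhd (v : T) : {set T} := [set w | e v w].

Definition del_rel (S : {set T}) : rel T :=
  [rel a b | [&& a \notin S, b \notin S & e a b]].

Definition separating (S : {set T}) : Prop :=
  #|~: S| <= 1 \/
  exists x y, [/\ x \notin S, y \notin S & ~~ connect (del_rel S) x y].

Definition kappa : nat :=
  natmin (fun k => exists S : {set T}, #|S| = k /\ separating S).

(* faulty set F; for v in F: crash round f_v = fp_round v and the set
   F_v = fp_lost v of neighbours NOT reached in round f_v.
   (The values of fp_round / fp_lost outside F are irrelevant.) *)
Record fpat := FPat {
  fp_faulty : {set T};
  fp_round  : T -> nat;
  fp_lost   : T -> {set T}
}.

Definition valid_fpat (t : nat) (phi : fpat) : Prop :=
  #|fp_faulty phi| <= t /\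
  forall v, v \in fp_faulty phi ->
    [/\ 1 <= fp_round phi v, fp_lost phi v != set0 & fp_lost phi v \subset nbhd v].

Definition crashes_at (phi : fpat) (v : T) (r : nat) : bool :=
  (v \in fp_faulty phi) && (fp_round phi v == r).

Definition crashed_by (phi : fpat) (v : T) (r : nat) : bool :=
  (v \in fp_faulty phi) && (fp_round phi v <= r).

(* p = [u_1; ...; u_q]; for i = 1 .. q-1 (0-based index j = i-1):
   u_{i+1} in N(u_i), u_i not crashed during rounds 1..i-1, and
   u_{i+1} \notin F_{u_i} if u_i crashes at round i. *)
Fixpoint causal_from (phi : fpat) (i : nat) (u : T) (s : seq T) : bool :=
  match s with
  | [::] => true
  | w :: s' =>
      [&& e u w, ~~ crashed_by phi u i.-1,
          crashes_at phi u i ==> (w \notin fp_lost phi u)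
        & causal_from phi i.+1 w s']
  end.

(* there is a causal path w.r.t. phi of length k from v to w:
   u_1 = v, [u_2; ...; u_q] = s, u_q = w, k = q - 1 = size s *)
Definition causal_path (phi : fpat) (v w : T) (k : nat) : bool :=
  [exists s : k.-tuple T, causal_from phi 1 v s && (last v s == w)].

Definition cdist (phi : fpat) (v w : T) : option nat :=
  match excluded_middle_informative (exists k, causal_path phi v w k) with
  | left H => Some (ex_minn H)
  | right _ => None
  end.

(* ecc(v, phi): max over correct w of cdist; None encodes infinity *)
Definition ecc (phi : fpat) (v : T) : option nat :=
  if [forall w, (w \notin fp_faulty phi) ==> (cdist phi v w != None)]
  then Some (\max_(w | w \notin fp_faulty phi) odflt 0 (cdist phi v w))
  else None.

Definition in_PhiStar (t : nat) (v : T) (phi : fpat) : Prop :=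
  valid_fpat t phi /\ ecc phi v <> None.

Definition radius (t : nat) : nat :=
  natmin (fun r => exists v : T,
    r = natmax (fun k => exists phi, in_PhiStar t v phi /\ ecc phi v = Some k)).

End Graph.

(* A pattern attaining [max_phi ecc(v, phi)] already has eccentricity at
   least [radius(G, t)]; if that maximum is not attained, [natmax] defaults to
   0 and the failure-free pattern does.  A node u <> v crashing in round 1 can
   be made to crash in round 2 without reaching any neighbour instead: a
   causal path from v visits u at position i >= 2 only, where in both
   patterns u sends nothing, so the eccentricity of v is unchanged. *)
From mathcomp Require Import all_boot.
From Stdlib Require Import ClassicalEpsilon FunctionalExtensionality.

Set Implicit Arguments.
Unset Strict Implicit.
Unset Printing Implicit Defensive.

Lemma natmin_le (P : nat -> Prop) m : P m -> natmin P <= m.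
Proof.
move=> Pm; rewrite /natmin; case: excluded_middle_informative => [exMin|noMin].
  by case: (constructive_indefinite_description _ exMin) => x [_ minx] /=; apply: minx.
exfalso; apply: noMin.
pose Pb n := if excluded_middle_informative (P n) then true else false.
have PbP n : reflect (P n) (Pb n).
  by rewrite /Pb; case: excluded_middle_informative => ?; constructor.
have exPb : exists n, Pb n by exists m; apply/PbP.
case: (ex_minnP exPb) => x /PbP Px minx.
by exists x; split=> // k /PbP; apply: minx.
Qed.

Lemma natmax_attained (P : nat -> Prop) : P (natmax P) \/ natmax P = 0.
Proof.
rewrite /natmax; case: excluded_middle_informative => [exMax|_]; last by right.
by left; apply: (proj2_sig (constructive_indefinite_description _ exMax)).1.
Qed.

Section FailurePatterns.
Variables (T : finType) (e : rel T).

Lemma nbhd_neq0 : (forall x y : T, connect e x y) -> 2 <= #|T| ->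
  forall u, nbhd e u != set0.
Proof.
move=> conn twoT u.
have [y yu] : exists y, y != u.
  apply/existsP; apply: contraTT twoT => /existsPn onlyu.
  rewrite -(cards1 u) -ltnNge ltnS; apply: subset_leq_card.
  by apply/subsetP => a _; rewrite inE; move: (onlyu a); rewrite negbK.
case/connectP: (conn u y) => [[|w p] /= ]; first by move=> _ yE; rewrite yE eqxx in yu.
by case/andP=> uw _ _; apply/set0Pn; exists w; rewrite inE.
Qed.

Lemma eq_ecc (phi psi : fpat T) v :
  fp_faulty phi = fp_faulty psi ->
  (forall w k, causal_path e phi v w k = causal_path e psi v w k) ->
  ecc e phi v = ecc e psi v.
Proof.
move=> eqF eq_cp.
have eq_cd : cdist e phi v = cdist e psi v.
  apply: functional_extensionality => w; rewrite /cdist.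
  by have -> : causal_path e phi v w = causal_path e psi v w
    by apply: functional_extensionality; apply: eq_cp.
by rewrite /ecc eq_cd eqF.
Qed.

Section Postpone.
Variable v : T.

Definition crashes_early (phi : fpat T) (u : T) : bool :=
  [&& u \in fp_faulty phi, u != v & fp_round phi u == 1].

Definition postpone_crashes (phi : fpat T) : fpat T :=
  FPat (fp_faulty phi)
       (fun u => if crashes_early phi u then 2 else fp_round phi u)
       (fun u => if crashes_early phi u then nbhd e u else fp_lost phi u).

Lemma causal_from_postpone phi i u s : 0 < i -> (i = 1 -> u = v) ->
  causal_from e (postpone_crashes phi) i u s = causal_from e phi i u s.
Proof.
elim: s i u => [//|w s IH] i u i_gt0 i1u /=.
rewrite IH //; last by case: i i_gt0 i1u.
rewrite /crashed_by /crashes_at /=.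
case early: (crashes_early phi u) => //.
case/and3P: early => -> uv /eqP ->.
case: i i_gt0 i1u => [|[|[|i]]] // _ i1u /=.
- by rewrite i1u // eqxx in uv.
- by rewrite inE; case: (e u w).
Qed.

Lemma ecc_postpone phi : ecc e (postpone_crashes phi) v = ecc e phi v.
Proof.
apply: eq_ecc => // w k; apply: eq_existsb => s.
by rewrite causal_from_postpone.
Qed.

Lemma postpone_no_round1_crash phi u :
  u != v -> ~~ crashes_at (postpone_crashes phi) u 1.
Proof.
move=> uv; rewrite /crashes_at /=.
case early: (crashes_early phi u); first by rewrite andbF.
by move: early; rewrite /crashes_early uv /= => ->.
Qed.

Lemma valid_postpone t phi : (forall u, nbhd e u != set0) ->
  valid_fpat e t phi -> valid_fpat e t (postpone_crashes phi).
Proof.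
move=> nbhd_n0 [cardF okF]; split=> // u uF /=.
by case: (crashes_early phi u); last exact: okF.
Qed.

End Postpone.

Definition no_failures : fpat T := FPat set0 (fun _ => 0) (fun _ => set0).

Lemma causal_from_no_failures i u s : causal_from e no_failures i u s = path e u s.
Proof.
elim: s i u => [//|w s IH] i u /=.
by rewrite IH /crashed_by /crashes_at inE.
Qed.

Lemma PhiStar_no_failures t v : (forall x y : T, connect e x y) ->
  in_PhiStar e t v no_failures.
Proof.
move=> conn; split; first by split=> [|u]; rewrite ?cards0 ?inE.
rewrite /ecc; have -> // : [forall w, (w \notin fp_faulty no_failures) ==>
                                      (cdist e no_failures v w != None)].
apply/forallP => w; apply/implyP => _.
rewrite /cdist; case: excluded_middle_informative => // noPath; exfalso.
case/connectP: (conn v w) => p vp wE; apply: noPath.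
exists (size p); apply/existsP; exists (in_tuple p).
by rewrite /= causal_from_no_failures vp -wE eqxx.
Qed.

Lemma exists_PhiStar_ecc_ge_radius t v : (forall x y : T, connect e x y) ->
  exists phi, in_PhiStar e t v phi /\
    exists k, ecc e phi v = Some k /\ radius e t <= k.
Proof.
move=> conn.
set P := fun k => exists phi, in_PhiStar e t v phi /\ ecc e phi v = Some k.
have rad_le : radius e t <= natmax P by apply: natmin_le; exists v.
case: (natmax_attained P) => [[phi [phiStar eccE]] | maxE].
  by exists phi; split=> //; exists (natmax P).
have [star0 ecc0] := PhiStar_no_failures t v conn.
exists no_failures; split=> //; case: (ecc e no_failures v) ecc0 => // k _.
by exists k; split=> //; apply: leq_trans rad_le _; rewrite maxE.
Qed.

End FailurePatterns.

Theorem mainTheorem4 (T : finType) (e : rel T)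
  (e_sym : symmetric e) (e_irr : irreflexive e)
  (G_conn : forall x y : T, connect e x y)
  (n_ge2 : 2 <= #|T|) (t : nat) (t_lt : t < kappa e) :
  forall v : T, exists phi : fpat T,
    [/\ in_PhiStar e t v phi,
        (forall u : T, u != v -> ~~ crashes_at phi u 1)
      & exists k, ecc e phi v = Some k /\ radius e t <= k].
Proof.
move=> v.
have [phi [[valid eccN] [k [eccE rad_le]]]] := exists_PhiStar_ecc_ge_radius t v G_conn.
exists (postpone_crashes e v phi); split.
- split; first exact: valid_postpone (nbhd_neq0 G_conn n_ge2) valid.
  by rewrite ecc_postpone.
- exact: postpone_no_round1_crash.
- by exists k; rewrite ecc_postpone.
Qed.
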